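(* Let $\mathcal{F}$ be the class of all finitary $\mathbb{M}$-algebras. A class $\mathcal{V}$ of $\mathbb{M}$-algebras is a pseudo-variety if, and only if, $\mathcal{V}=\mathrm{Mod}_{\mathcal{F}}(\Phi)$ for some set $\Phi$ of $\mathbb{M}$-inequalities (possibly over several different finite unordered sets $X$).
   Context: Fix a set $\Xi$ of sorts; $\mathsf{Pos}^\Xi$: $\Xi$-sorted families of partial orders with sort-wise monotone maps. $\mathbb{M}$ is a monad on $\mathsf{Pos}^\Xi$ ($\mathrm{flat},\mathrm{sing}$) preserving injective, surjective, bijective functions and preimages and using the standard ordering (order on $\mathbb{M}A$ is $\{(\mathbb{M}p(u),\mathbb{M}q(u)):u\in\mathbb{M}R\}$, $R$ the order of $A$). $\mathbb{M}$-algebras $\langle A,\pi\rangle$: $\pi\circ\mathbb{M}\pi=\pi\circ\mathrm{flat}$, $\pi\circ\mathrm{sing}=\mathrm{id}$; morphisms commute with products. Finitary: sort-wise finite and generated by a finite subset. Quotient of $\mathfrak{B}$: codomain of a surjective morphism from $\mathfrak{B}$. For $\Delta\subseteq\Xi$: $A|_\Delta$ the part with sorts in $\Delta$, $\mathbb{M}|_\Delta A:=(\mathbb{M}(A|_\Delta))|_\Delta$, $\mathfrak{A}|_\Delta$ the $\mathbb{M}|_\Delta$-algebra on $A|_\Delta$ with restricted product. $\mathfrak{B}$ is a sort-accumulation point of $\mathcal{A}$ if for every finite $\Delta\subseteq\Xi$ there is $\mathfrak{A}\in\mathcal{A}$ with $\mathfrak{B}|_\Delta$ a quotient of $\mathfrak{A}|_\Delta$.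 A pseudo-variety is a class of finitary algebras closed under quotients, finitary subalgebras of finite products and sort-accumulation points. Profinitary terms: for a finite unordered set $X$, $\widehat{\mathbb{M}}X$ is the limit (in the comma category under $\mathbb{M}X$) of the diagram of all morphisms $\beta:\mathbb{M}X\to\mathfrak{A}$ with $\mathfrak{A}$ finitary, connected by morphisms $\varphi:\mathfrak{A}\to\mathfrak{B}$; concretely, an element $t\in\widehat{\mathbb{M}}_\xi X$ is a family $(t_\beta)_\beta$ with $t_\beta\in A_\xi$ for $\beta:\mathbb{M}X\to\mathfrak{A}$ such that $\varphi(t_\beta)=t_{\varphi\circ\beta}$ for all morphisms $\varphi$ between finitary algebras, ordered componentwise, and $\mathrm{val}(t;\beta):=t_\beta$. An $\mathbb{M}$-inequality over $X$ is $s\leq t$ with $s,t\in\widehat{\mathbb{M}}X$ of the same sort; a finitary algebra $\mathfrak{A}$ satisfies it if $\mathrm{val}(s;\beta)\leq\mathrm{val}(t;\beta)$ for all morphisms $\beta:\mathbb{M}X\to\mathfrak{A}$. $\mathrm{Mod}_{\mathcal{F}}(\Phi)$ is the class of all $\mathfrak{A}\in\mathcal{F}$ satisfying every inequality in $\Phi$. *)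

From Stdlib Require Import List ProofIrrelevance.
Unset Implicit Arguments.
Unset Strict Implicit.

Section Defs.
Variable Xi : Type.

Record SPos : Type := {
  car :> Xi -> Type;
  le : forall x : Xi, car x -> car x -> Prop;
  le_refl : forall x (a : car x), le x a a;
  le_trans : forall x (a b c : car x), le x a b -> le x b c -> le x a c;
  le_antisym : forall x (a b : car x), le x a b -> le x b a -> a = b }.

Record SMor (A B : SPos) : Type := {
  app :> forall x : Xi, A x -> B x;
  mono : forall x (a b : A x), le A x a b -> le B x (app x a) (app x b) }.

Definition idm (A : SPos) : SMor A A :=
  {| app := fun x a => a; mono := fun x a b H => H |}.

Definition comp (A B C : SPos) (g : SMor B C) (f : SMor A B) : SMor A C :=
  {| app := fun x a => g x (f x a);
     mono := fun x a b H => mono B C g x _ _ (mono A B f x a b H) |}.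

Arguments app {A B} _ _ _.
Arguments comp {A B C} _ _.
Definition sort_injective (A B : SPos) (f : SMor A B) : Prop :=
  forall x (a b : A x), f x a = f x b -> a = b.
Definition sort_surjective (A B : SPos) (f : SMor A B) : Prop :=
  forall x (b : B x), exists a : A x, f x a = b.

Arguments sort_injective {A B} _.
Arguments sort_surjective {A B} _.

Program Definition sub (A : SPos) (S : forall x, A x -> Prop) : SPos :=
  {| car := fun x => {a : A x | S x a};
     le := fun x a b => le A x (proj1_sig a) (proj1_sig b) |}.
Next Obligation. apply le_refl. Qed.
Next Obligation. eapply le_trans; eauto. Qed.
Next Obligation.
  pose proof (le_antisym A x a b H H0); subst; f_equal; apply proof_irrelevance.
Qed.

Definition incl (A : SPos) (S : forall x, A x -> Prop) : SMor (sub A S) A :=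
  {| app := fun x (a : sub A S x) => proj1_sig a; mono := fun x a b H => H |}.

Program Definition Rel (A : SPos) : SPos :=
  {| car := fun x => {p : A x * A x | le A x (fst p) (snd p)};
     le := fun x a b => le A x (fst (proj1_sig a)) (fst (proj1_sig b)) /\
                        le A x (snd (proj1_sig a)) (snd (proj1_sig b)) |}.
Next Obligation. split; apply le_refl. Qed.
Next Obligation. split; eapply le_trans; eauto. Qed.
Next Obligation.
  simpl in *.
  pose proof (le_antisym A x c1 c H H0); pose proof (le_antisym A x c2 c0 H2 H1).
  subst; f_equal; apply proof_irrelevance.
Qed.

Definition projL (A : SPos) : SMor (Rel A) A :=
  {| app := fun x (a : Rel A x) => fst (proj1_sig a); mono := fun x a b H => proj1 H |}.
Definition projR (A : SPos) : SMor (Rel A) A :=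
  {| app := fun x (a : Rel A x) => snd (proj1_sig a); mono := fun x a b H => proj2 H |}.

Set Implicit Arguments.
Set Strict Implicit.
Record Monad : Type := {
  MO : SPos -> SPos;
  Mf : forall A B : SPos, SMor A B -> SMor (MO A) (MO B);
  sing : forall A : SPos, SMor A (MO A);
  flat : forall A : SPos, SMor (MO (MO A)) (MO A);
  Mf_id : forall A x (u : MO A x), Mf (idm A) x u = u;
  Mf_comp : forall A B C (f : SMor A B) (g : SMor B C) x (u : MO A x),
      Mf (comp g f) x u = Mf g x (Mf f x u);
  sing_nat : forall A B (f : SMor A B) x (a : A x),
      Mf f x (sing A x a) = sing B x (f x a);
  flat_nat : forall A B (f : SMor A B) x (u : MO (MO A) x),
      Mf f x (flat A x u) = flat B x (Mf (Mf f) x u);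
  flat_sing : forall A x (u : MO A x), flat A x (sing (MO A) x u) = u;
  flat_Msing : forall A x (u : MO A x), flat A x (Mf (sing A) x u) = u;
  flat_assoc : forall A x (u : MO (MO (MO A)) x),
      flat A x (flat (MO A) x u) = flat A x (Mf (flat A) x u) }.

Variable M : Monad.

Definition preserves_injective : Prop :=
  forall A B (f : SMor A B), sort_injective f -> sort_injective (Mf M f).
Definition preserves_surjective : Prop :=
  forall A B (f : SMor A B), sort_surjective f -> sort_surjective (Mf M f).
Definition preserves_bijective : Prop :=
  forall A B (f : SMor A B), sort_injective f /\ sort_surjective f ->
    sort_injective (Mf M f) /\ sort_surjective (Mf M f).
(* M(f^-1(S)) = (Mf)^-1(M S), both viewed as subsets of M A via inclusions *)
Definition preserves_preimages : Prop :=
  forall A B (f : SMor A B) (S : forall x, B x -> Prop) x (u : MO M A x),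
    (exists v : MO M (sub B S) x, Mf M (incl B S) x v = Mf M f x u) <->
    (exists w : MO M (sub A (fun y a => S y (f y a))) x,
        Mf M (incl A (fun y a => S y (f y a))) x w = u).
Definition standard_ordering : Prop :=
  forall A x (a b : MO M A x),
    le (MO M A) x a b <->
    exists u : MO M (Rel A) x, Mf M (projL A) x u = a /\ Mf M (projR A) x u = b.

Definition good_monad : Prop :=
  preserves_injective /\ preserves_surjective /\ preserves_bijective /\
  preserves_preimages /\ standard_ordering.

Record Alg : Type := {
  acar :> SPos;
  prod : SMor (MO M acar) acar;
  prod_assoc : forall x (u : MO M (MO M acar) x),
      prod x (Mf M prod x u) = prod x (flat M acar x u);
  prod_unit : forall x (a : acar x), prod x (sing M acar x a) = a }.

Definition is_alg_hom (A B : Alg) (h : SMor A B) : Prop :=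
  forall x (u : MO M A x), h x (prod A x u) = prod B x (Mf M h x u).

Arguments is_alg_hom {A B} _.

Record AlgHom (A B : Alg) : Type := {
  ahom :> SMor A B;
  ahom_spec : is_alg_hom ahom }.

Definition sortwise_finite (A : SPos) : Prop :=
  forall x, exists l : list (A x), forall a : A x, In a l.

Definition closed_subset (A : Alg) (S : forall x, A x -> Prop) : Prop :=
  forall x (u : MO M (sub A S) x), S x (prod A x (Mf M (incl A S) x u)).

Arguments closed_subset {A} _.

Definition finitely_generated (A : Alg) : Prop :=
  exists C : list {x : Xi & A x},
    forall S : forall x, A x -> Prop,
      (forall c, In c C -> S (projT1 c) (projT2 c)) -> closed_subset S ->
      forall x (a : A x), S x a.

Definition finitary (A : Alg) : Prop :=
  sortwise_finite A /\ finitely_generated A.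

Definition is_quotient_of (B A : Alg) : Prop :=
  exists h : AlgHom A B, sort_surjective h.

Definition restr (A : SPos) (D : list Xi) : SPos := sub A (fun x _ => In x D).

(* h : A|D -> B|D is a morphism of M|D-algebras (restricted products) *)
Definition is_restr_hom (A B : Alg) (D : list Xi)
    (h : SMor (restr A D) (restr B D)) : Prop :=
  forall x (Hx : In x D) (u : MO M (restr A D) x),
    proj1_sig (h x (exist _ (prod A x (Mf M (incl A _) x u)) Hx)) =
    prod B x (Mf M (incl B _) x (Mf M h x u)).

Arguments is_restr_hom {A B D} _.

Definition restr_is_quotient (B A : Alg) (D : list Xi) : Prop :=
  exists h : SMor (restr A D) (restr B D), is_restr_hom h /\ sort_surjective h.

Definition sort_accumulation_point (V : Alg -> Prop) (B : Alg) : Prop :=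
  forall D : list Xi, exists A : Alg, V A /\ restr_is_quotient B A D.

Definition closed_quotients (V : Alg -> Prop) : Prop :=
  forall A B : Alg, V A -> is_quotient_of B A -> V B.

(* B is (isomorphic to) a subalgebra of the finite product of the A i:
   a family of morphisms B -> A i that is jointly an order embedding *)
Definition closed_fin_subproducts (V : Alg -> Prop) : Prop :=
  forall (I : Type) (enumI : list I), (forall i, In i enumI) ->
  forall (A : I -> Alg), (forall i, V (A i)) ->
  forall (B : Alg), finitary B ->
  forall (h : forall i, AlgHom B (A i)),
    (forall x (b b' : B x), (forall i, le (A i) x (h i x b) (h i x b')) -> le B x b b') ->
    V B.

Definition closed_accumulation (V : Alg -> Prop) : Prop :=
  forall B : Alg, finitary B -> sort_accumulation_point V B -> V B.

Definition pseudo_variety (V : Alg -> Prop) : Prop :=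
  (forall A, V A -> finitary A) /\ closed_quotients V /\
  closed_fin_subproducts V /\ closed_accumulation V.

Record FinSorted : Type := {
  fT : Type;
  fenum : list fT;
  fenum_all : forall t : fT, In t fenum;
  fsort : fT -> Xi }.

Program Definition DX (X : FinSorted) : SPos :=
  {| car := fun x => {t : fT X | fsort X t = x};
     le := fun x a b => a = b |}.
Next Obligation. intros; subst; try reflexivity; try (f_equal; apply proof_irrelevance). Qed.

Record FreeHom (X : FinSorted) (A : Alg) : Type := {
  fhom :> SMor (MO M (DX X)) A;
  fhom_spec : forall x (u : MO M (MO M (DX X)) x),
      fhom x (flat M (DX X) x u) = prod A x (Mf M fhom x u) }.

Lemma compFree_spec (X : FinSorted) (A B : Alg) (phi : AlgHom A B) (b : FreeHom X A) :
  forall x (u : MO M (MO M (DX X)) x),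
    comp phi b x (flat M (DX X) x u) = prod B x (Mf M (comp phi b) x u).
Proof.
  intros x u; simpl. rewrite (fhom_spec b), (ahom_spec phi), Mf_comp. reflexivity.
Qed.

Definition compFree (X : FinSorted) (A B : Alg) (phi : AlgHom A B) (b : FreeHom X A)
  : FreeHom X B := {| fhom := comp phi b; fhom_spec := compFree_spec phi b |}.

Definition hatM (X : FinSorted) (x : Xi) : Type :=
  { t : forall A : Alg, finitary A -> FreeHom X A -> A x |
    forall (A B : Alg) (HA : finitary A) (HB : finitary B) (phi : AlgHom A B)
           (b : FreeHom X A),
      phi x (t A HA b) = t B HB (compFree phi b) }.

Definition val (X : FinSorted) (x : Xi) (t : hatM X x) (A : Alg) (HA : finitary A)
  (b : FreeHom X A) : A x := proj1_sig t A HA b.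

Record Ineq : Type := {
  iX : FinSorted;
  isort : Xi;
  ilhs : hatM iX isort;
  irhs : hatM iX isort }.

Definition satisfies (A : Alg) (HA : finitary A) (e : Ineq) : Prop :=
  forall b : FreeHom (iX e) A,
    le A (isort e) (val (ilhs e) HA b) (val (irhs e) HA b).

Definition Mod (Phi : Ineq -> Prop) (A : Alg) : Prop :=
  exists HA : finitary A, forall e, Phi e -> satisfies HA e.

End Defs.

From Stdlib Require Import List Classical ClassicalEpsilon.
From Stdlib Require Import FunctionalExtensionality PropExtensionality ProofIrrelevance.
From mathcomp Require classical_sets filter.
Set Bullet Behavior "Strict Subproofs".

(* Evaluation of profinitary terms is natural in morphisms, so every class Mod(Phi) is closed
   under quotients and finitary subalgebras of finite products; and since an inequality over
   X of sort y only involves the finitely many sorts of X and y, it transfers from an algebra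
   A to any B whose restriction to those sorts is a quotient of that of A.

   Conversely, let Phi be the set of inequalities valid in a pseudo-variety V and let A be a
   finitary model of Phi, covered by a surjective e : M X -> A.  If a is not below a' in A,
   some algebra of V separates all preimage pairs (u, v) of (a, a'): otherwise, as V is
   closed under finite subproducts, the sets of pairs not separated by a given algebra of V
   have the finite intersection property, and the ultralimits of u and v along an
   ultrafilter containing them are profinitary terms s <= t, valid in V, that evaluate
   under e to a and a'.  For finitely many sorts D, the image of M X in the finitely many algebras
   separating the failures on D lies in V and has A|D as a quotient, so A is a
   sort-accumulation point of V. *)

Lemma sorted_choice (I : Type) (P Q : I -> Type) (R : forall i, P i -> Q i -> Prop) :
  (forall i (p : P i), exists q, R i p q) ->
  exists f : forall i, P i -> Q i, forall i p, R i p (f i p).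
Proof.
  intros H. exists (fun i p => proj1_sig (constructive_indefinite_description _ (H i p))).
  intros i p. exact (proj2_sig (constructive_indefinite_description _ (H i p))).
Qed.

Lemma list_sig_complete (T : Type) (P : T -> Prop) (l : list T) :
  (forall t, P t -> In t l) -> exists l' : list {t | P t}, forall s, In s l'.
Proof.
  intros Hl.
  assert (G : exists l' : list {t | P t}, forall t (H : P t), In t l -> In (exist P t H) l').
  { clear Hl. induction l as [|a l IH].
    - exists nil. intros t H [].
    - destruct IH as [l' Hl']. destruct (classic (P a)) as [Ha|Na].
      + exists (exist P a Ha :: l'). intros t H [<-|Ht].
        * left. f_equal. apply proof_irrelevance.
        * right. apply Hl'. exact Ht.
      + exists l'. intros t H [<-|Ht]; [contradiction|]. apply Hl'. exact Ht. }
  destruct G as [l' Hl']. exists l'. intros [t H]. apply Hl', Hl, H.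
Qed.

Lemma list_witnesses (K W : Type) (Q : K -> W -> Prop) (l : list K) :
  exists lw, forall k, In k l -> (exists w, Q k w) -> exists w, In w lw /\ Q k w.
Proof.
  induction l as [|k l IH].
  - exists nil. intros k [].
  - destruct IH as [lw Hlw]. destruct (classic (exists w, Q k w)) as [[w Hw]|N].
    + exists (w :: lw). intros k' [<-|Hk'] Hex.
      * exists w. split; [left; reflexivity|exact Hw].
      * destruct (Hlw k' Hk' Hex) as [w' [H1 H2]]. exists w'. split; [right; exact H1|exact H2].
    + exists lw. intros k' [<-|Hk'] Hex; [contradiction|]. apply Hlw; assumption.
Qed.

Lemma ultrafilter_of_fip (T J : Type) (ok : J -> Prop) (P0 : T -> Prop) (G : J -> T -> Prop) :
  (forall L, (forall j, In j L -> ok j) -> exists p, P0 p /\ forall j, In j L -> G j p) ->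
  exists U : (T -> Prop) -> Prop, filter.UltraFilter U /\ U P0 /\ forall j, ok j -> U (G j).
Proof.
  intros Hfip.
  pose (F := fun S : T -> Prop => exists L, (forall j, In j L -> ok j) /\
               forall p, P0 p -> (forall j, In j L -> G j p) -> S p).
  assert (PF : filter.ProperFilter F).
  { apply filter.Build_ProperFilter_ex.
    - intros S [L [HL HS]]. destruct (Hfip L HL) as [p [H0 Hp]]. exists p. exact (HS p H0 Hp).
    - constructor.
      + exists nil. split; [intros j []|]. intros; exact Logic.I.
      + intros S1 S2 [L1 [V1 H1]] [L2 [V2 H2]]. exists (L1 ++ L2). split.
        * intros j Hj. apply in_app_or in Hj. destruct Hj; auto.
        * intros p H0 Hp. split; [apply H1|apply H2]; auto; intros j Hj; apply Hp, in_or_app; auto.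
      + intros S1 S2 Hsub [L [VL HL]]. exists L. split; [exact VL|].
        intros p H0 Hp. apply Hsub, HL; assumption. }
  destruct (filter.ultraFilterLemma PF) as [U [UU FU]].
  exists U. split; [exact UU|]. split.
  - apply FU. exists nil. split; [intros j []|]. intros p H0 _. exact H0.
  - intros j Hj. apply FU. exists (j :: nil). split; [intros k [<-|[]]; exact Hj|].
    intros p _ Hp. apply Hp. left; reflexivity.
Qed.

Section Ultralimits.
Variables (T : Type) (U : (T -> Prop) -> Prop).
Hypothesis U_ultra : filter.UltraFilter U.

Lemma ultralimit_exists (R : Type) (f : T -> R) :
  (exists l : list R, forall r, In r l) -> exists r, U (fun p => f p = r).
Proof.
  intros [l Hl].
  assert (G : forall l, U (fun p => In (f p) l) -> exists r, U (fun p => f p = r)).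
  { clear Hl. intros l'. induction l' as [|r l' IH]; intros Hu.
    - destruct (filter.filter_ex Hu) as [p []].
    - destruct (filter.in_ultra_setVsetC (fun p => f p = r) U_ultra) as [Hr|Hr];
        [exists r; exact Hr|].
      apply IH. apply (filter.filterS (P := fun p => In (f p) (r :: l') /\ ~ f p = r));
        [|exact (filter.filterI Hu Hr)].
      intros p [[E|Hp] Hn]; [contradiction (Hn (eq_sym E))|exact Hp]. }
  apply (G l). apply (filter.filterS (P := fun _ => True));
    [intros p _; apply Hl|apply filter.filterT].
Qed.

Lemma ultralimit_unique (R : Type) (f : T -> R) r r' :
  U (fun p => f p = r) -> U (fun p => f p = r') -> r = r'.
Proof.
  intros H1 H2. destruct (filter.filter_ex (filter.filterI H1 H2)) as [p [E1 E2]].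
  congruence.
Qed.

End Ultralimits.

Section Algebras.
Variable Xi : Type.
Variable M : Monad Xi.
Notation cmp g f := (comp Xi _ _ _ g f).
Notation ssurj f := (sort_surjective Xi _ _ f).

Lemma smor_ext {A B : SPos Xi} (f g : SMor Xi A B) :
  (forall x a, f x a = g x a) -> f = g.
Proof.
  intros H. destruct f as [f fm], g as [g gm]; simpl in H.
  assert (E : f = g).
  { apply functional_extensionality_dep; intro x.
    apply functional_extensionality; intro a. apply H. }
  subst g. f_equal. apply proof_irrelevance.
Qed.

Lemma freehom_ext (X : FinSorted Xi) (A : Alg M) (b c : FreeHom X A) :
  (forall x u, b x u = c x u) -> b = c.
Proof.
  intros H. destruct b as [b bs], c as [c cs]; simpl in H.
  assert (E : b = c) by (apply smor_ext; exact H).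
  subst c. f_equal. apply proof_irrelevance.
Qed.

Lemma Mf_ext {A B : SPos Xi} (f g : SMor Xi A B) :
  (forall x a, f x a = g x a) -> forall x u, Mf M f x u = Mf M g x u.
Proof. intros H. rewrite (smor_ext f g H). reflexivity. Qed.

Lemma val_natural (X : FinSorted Xi) (x : Xi) (t : hatM M X x) (A B : Alg M)
  (HA : finitary A) (HB : finitary B) (phi : AlgHom A B) (b : FreeHom X A) :
  phi x (val t HA b) = val t HB (compFree phi b).
Proof. exact (proj2_sig t A B HA HB phi b). Qed.

Definition discrete_mor {X : FinSorted Xi} {A : SPos Xi} (f : forall x, DX X x -> A x) :
  SMor Xi (DX X) A.
Proof.
  refine (Build_SMor Xi _ _ f _).
  intros x a b H. simpl in H. subst b. apply le_refl.
Defined.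

Lemma prod_Mf_generators (X : FinSorted Xi) (A : Alg M) (b : FreeHom X A)
  (f : SMor Xi (DX X) A) :
  (forall x d, f x d = b x (sing M (DX X) x d)) ->
  forall x u, prod A x (Mf M f x u) = b x u.
Proof.
  intros Hf x u.
  rewrite (Mf_ext f (cmp b (sing M (DX X))) Hf), Mf_comp, <- fhom_spec, flat_Msing.
  reflexivity.
Qed.

Lemma free_ext_spec {X : FinSorted Xi} {A : Alg M} (a0 : SMor Xi (DX X) A) :
  forall x (u : MO M (MO M (DX X)) x),
    cmp (prod A) (Mf M a0) x (flat M (DX X) x u) =
    prod A x (Mf M (cmp (prod A) (Mf M a0)) x u).
Proof.
  intros x u. simpl. rewrite flat_nat, <- prod_assoc, Mf_comp. reflexivity.
Qed.

Definition free_ext {X : FinSorted Xi} {A : Alg M} (a0 : SMor Xi (DX X) A) : FreeHom X A :=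
  {| fhom := cmp (prod A) (Mf M a0); fhom_spec := free_ext_spec a0 |}.

Lemma free_ext_sing {X : FinSorted Xi} {A : Alg M} (a0 : SMor Xi (DX X) A) x d :
  free_ext a0 x (sing M (DX X) x d) = a0 x d.
Proof. simpl. rewrite sing_nat, prod_unit. reflexivity. Qed.

Lemma free_hom_surj_generated (X : FinSorted Xi) (A : Alg M) (e : FreeHom X A) :
  ssurj e -> finitely_generated A.
Proof.
  intros He.
  exists (map (fun t => existT (fun x => A x) (fsort X t)
                 (e _ (sing M (DX X) _ (exist (fun t' => fsort X t' = fsort X t) t eq_refl))))
              (fenum X)).
  intros S HC Hcl.
  assert (Hgen : forall x (d : DX X x), S x (e x (sing M (DX X) x d))).
  { intros x [t Ht]. subst x.
    apply (HC (existT (fun x => A x) _ _)). apply in_map_iff.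
    exists t. split; [reflexivity|apply fenum_all]. }
  pose (k := discrete_mor (A := sub Xi A S) (fun x d => exist _ _ (Hgen x d))).
  intros x a. destruct (He x a) as [u <-].
  rewrite <- (prod_Mf_generators X A e (cmp (incl Xi A S) k)) by reflexivity.
  rewrite Mf_comp. apply Hcl.
Qed.

Hypothesis Hsurj : preserves_surjective M.

Lemma free_image_closed (X : FinSorted Xi) (A : Alg M) (e : FreeHom X A) :
  @closed_subset Xi M A (fun x a => exists u, e x u = a).
Proof.
  intros y w.
  assert (km : forall z (u v : MO M (DX X) z), le Xi _ z u v ->
      le Xi (sub Xi A (fun x a => exists u, e x u = a)) z
         (exist _ (e z u) (ex_intro _ u eq_refl)) (exist _ (e z v) (ex_intro _ v eq_refl))).
  { intros z u v H. simpl. apply mono, H. }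
  pose (k := Build_SMor Xi (MO M (DX X)) (sub Xi A (fun x a => exists u, e x u = a))
               (fun z u => exist _ (e z u) (ex_intro _ u eq_refl)) km).
  assert (ks : ssurj k).
  { intros z [a [u Hu]]. exists u. subst a. reflexivity. }
  destruct (Hsurj _ _ k ks y w) as [w' <-].
  exists (flat M (DX X) y w'). rewrite fhom_spec, <- Mf_comp. f_equal. apply Mf_ext. reflexivity.
Qed.

Lemma free_cover_of_generated (A : Alg M) :
  finitely_generated A -> exists (X : FinSorted Xi) (e : FreeHom X A), ssurj e.
Proof.
  intros [C HC].
  destruct (list_sig_complete _ (fun c => In c C) C (fun c H => H)) as [l Hl].
  pose (X := {| fT := {c | In c C}; fenum := l; fenum_all := Hl;
                fsort := fun c : {c | In c C} => projT1 (proj1_sig c) |}).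
  (* the generator [c] of sort [projT1 c] is sent to [projT2 c] *)
  pose (e := free_ext (@discrete_mor X A (fun y d =>
               eq_rect _ (fun y => A y) (projT2 (proj1_sig (proj1_sig d))) y (proj2_sig d)))).
  exists X, e. intros y a.
  apply (HC (fun y a => exists u, e y u = a)); [|apply free_image_closed].
  intros c Hc.
  exists (sing M (DX X) _ (exist (fun t => fsort X t = projT1 c) (exist _ c Hc : fT X) eq_refl)).
  unfold e. rewrite free_ext_sing. reflexivity.
Qed.

Section JointImage.
Variables (X : FinSorted Xi) (I : Type) (B : I -> Alg M) (beta : forall i, FreeHom X (B i)).

(* The image of M X in the product of the [B i], represented by the kernel classes of the
   [beta i] rather than by tuples, so that its carrier stays in the universe of [M X]. *)
Definition ker_class x (u : MO M (DX X) x) : MO M (DX X) x -> Prop :=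
  fun v => forall i, beta i x v = beta i x u.

Definition img_car x : Type := {S | exists u, S = ker_class x u}.

Definition img_rep x (c : img_car x) : MO M (DX X) x :=
  proj1_sig (constructive_indefinite_description _ (proj2_sig c)).

Lemma img_rep_spec x (c : img_car x) : proj1_sig c = ker_class x (img_rep x c).
Proof. exact (proj2_sig (constructive_indefinite_description _ (proj2_sig c))). Qed.

Definition img_proj i x (c : img_car x) : B i x := beta i x (img_rep x c).

Lemma img_proj_inj x (c c' : img_car x) :
  (forall i, img_proj i x c = img_proj i x c') -> c = c'.
Proof.
  intros H.
  assert (E : proj1_sig c = proj1_sig c').
  { rewrite (img_rep_spec x c), (img_rep_spec x c').
    apply functional_extensionality; intro v. apply propositional_extensionality.
    unfold ker_class, img_proj in *. split; intros Hv i; rewrite Hv; [|symmetry]; apply H. }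
  destruct c as [S HS], c' as [S' HS']. simpl in E. subst S'.
  f_equal. apply proof_irrelevance.
Qed.

Definition img_class x (u : MO M (DX X) x) : img_car x :=
  exist _ (ker_class x u) (ex_intro _ u eq_refl).

Lemma img_proj_class i x u : img_proj i x (img_class x u) = beta i x u.
Proof.
  assert (Hu : proj1_sig (img_class x u) u) by (intro; reflexivity).
  rewrite (img_rep_spec x (img_class x u)) in Hu. symmetry. apply Hu.
Qed.

Lemma img_class_rep x (c : img_car x) : img_class x (img_rep x c) = c.
Proof. apply img_proj_inj. intro i. apply img_proj_class. Qed.

Definition ImgPos : SPos Xi.
Proof.
  refine {| car := img_car;
            le := fun x c c' => forall i, le Xi (B i) x (img_proj i x c) (img_proj i x c') |}.
  - intros x c i. apply le_refl.
  - intros x c1 c2 c3 H1 H2 i. eapply le_trans; [apply H1|apply H2].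
  - intros x c c' H1 H2. apply img_proj_inj. intro i. apply le_antisym; [apply H1|apply H2].
Defined.

Definition img_proj_mor i : SMor Xi ImgPos (B i).
Proof. refine (Build_SMor Xi ImgPos (B i) (img_proj i) _). intros x c c' H. apply H. Defined.

Definition img_class_mor : SMor Xi (MO M (DX X)) ImgPos.
Proof.
  refine (Build_SMor Xi _ ImgPos img_class _).
  intros x u v H i. simpl. rewrite !img_proj_class. apply mono, H.
Defined.

Lemma img_class_mor_surj : ssurj img_class_mor.
Proof. intros x c. exists (img_rep x c). apply img_class_rep. Qed.

Lemma img_proj_class_mor i : cmp (img_proj_mor i) img_class_mor = beta i.
Proof. apply smor_ext. intros x u. apply img_proj_class. Qed.

Definition img_lift x (w : MO M ImgPos x) : MO M (MO M (DX X)) x :=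
  proj1_sig (constructive_indefinite_description _
    (Hsurj _ _ img_class_mor img_class_mor_surj x w)).

Lemma img_lift_spec x (w : MO M ImgPos x) : Mf M img_class_mor x (img_lift x w) = w.
Proof.
  exact (proj2_sig (constructive_indefinite_description _
    (Hsurj _ _ img_class_mor img_class_mor_surj x w))).
Qed.

Definition img_prod x (w : MO M ImgPos x) : img_car x :=
  img_class x (flat M (DX X) x (img_lift x w)).

Lemma img_proj_prod i x w :
  img_proj i x (img_prod x w) = prod (B i) x (Mf M (img_proj_mor i) x w).
Proof.
  unfold img_prod. rewrite img_proj_class, fhom_spec, <- (img_proj_class_mor i), Mf_comp.
  rewrite img_lift_spec. reflexivity.
Qed.

Definition img_prod_mor : SMor Xi (MO M ImgPos) ImgPos.
Proof.
  refine (Build_SMor Xi _ ImgPos img_prod _).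
  intros x w w' H i. simpl. rewrite !img_proj_prod. apply mono, mono, H.
Defined.

Definition ImgAlg : Alg M.
Proof.
  refine {| acar := ImgPos; prod := img_prod_mor |}.
  - intros x u. apply img_proj_inj. intro i. simpl. rewrite !img_proj_prod, <- Mf_comp.
    assert (E : cmp (img_proj_mor i) img_prod_mor = cmp (prod (B i)) (Mf M (img_proj_mor i))).
    { apply smor_ext. intros y w. apply img_proj_prod. }
    rewrite E, Mf_comp, prod_assoc, <- flat_nat. reflexivity.
  - intros x c. apply img_proj_inj. intro i. simpl.
    rewrite img_proj_prod, sing_nat, prod_unit. reflexivity.
Defined.

Definition img_proj_hom i : AlgHom ImgAlg (B i).
Proof.
  refine {| ahom := (img_proj_mor i : SMor Xi ImgAlg (B i)) |}.
  intros x w. apply img_proj_prod.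
Defined.

Lemma img_free_spec x (u : MO M (MO M (DX X)) x) :
  img_class_mor x (flat M (DX X) x u) = prod ImgAlg x (Mf M img_class_mor x u).
Proof.
  apply img_proj_inj. intro i. simpl. rewrite img_proj_class, img_proj_prod, <- Mf_comp.
  rewrite img_proj_class_mor. apply fhom_spec.
Qed.

Definition img_free : FreeHom X ImgAlg :=
  {| fhom := (img_class_mor : SMor Xi (MO M (DX X)) ImgAlg); fhom_spec := img_free_spec |}.

Lemma img_free_proj i : compFree (img_proj_hom i) img_free = beta i.
Proof. apply freehom_ext. intros x u. apply img_proj_class. Qed.

Lemma finite_classes (HBf : forall i, sortwise_finite (B i)) x (L : list I) :
  exists l : list (MO M (DX X) x),
    forall u, exists w, In w l /\ forall i, In i L -> beta i x u = beta i x w.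
Proof.
  induction L as [|i L IH].
  - destruct (classic (exists u : MO M (DX X) x, True)) as [[u0 _]|N].
    + exists (u0 :: nil). intro u. exists u0. split; [left; reflexivity|intros i []].
    + exists nil. intro u. exfalso. apply N. exists u. exact Logic.I.
  - destruct IH as [l' Hl']. destruct (HBf i x) as [lb Hlb].
    destruct (list_witnesses _ _
      (fun k u => (forall j, In j L -> beta j x u = beta j x (fst k)) /\ beta i x u = snd k)
      (list_prod l' lb)) as [lu Hlu].
    exists lu. intro u. destruct (Hl' u) as [w [Hw1 Hw2]].
    destruct (Hlu (w, beta i x u)) as [u' [Hu'1 [Hu'2 Hu'3]]].
    + apply in_prod; [exact Hw1|apply Hlb].
    + exists u. split; [exact Hw2|reflexivity].
    + exists u'. split; [exact Hu'1|]. simpl in *. intros j [<-|Hj].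
      * symmetry; exact Hu'3.
      * rewrite (Hw2 j Hj). symmetry. apply Hu'2, Hj.
Qed.

Lemma img_finitary (enumI : list I) (HI : forall i, In i enumI)
  (HBf : forall i, finitary (B i)) : finitary ImgAlg.
Proof.
  split; [|exact (free_hom_surj_generated X ImgAlg img_free img_class_mor_surj)].
  intro x. destruct (finite_classes (fun i => proj1 (HBf i)) x enumI) as [l Hl].
  exists (map (img_class x) l). intro c. rewrite <- (img_class_rep x c).
  destruct (Hl (img_rep x c)) as [w [Hw1 Hw2]].
  apply in_map_iff. exists w. split; [|exact Hw1].
  apply img_proj_inj. intro i. rewrite !img_proj_class. symmetry. apply Hw2, HI.
Qed.

End JointImage.

Arguments ImgAlg X [I] B beta.
Arguments img_free X [I] B beta.
Arguments img_proj_hom X [I] B beta i.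
Arguments img_proj X [I] B beta i x c.
Arguments img_rep X [I] B beta x c.
Arguments img_class X [I] B beta x u.

Lemma quotient_finitary (A B : Alg M) (h : AlgHom A B) :
  ssurj h -> finitary A -> finitary B.
Proof.
  intros Hs [Hf Hg]. split.
  - intro x. destruct (Hf x) as [l Hl]. exists (map (h x) l). intro b.
    destruct (Hs x b) as [a <-]. apply in_map, Hl.
  - destruct (free_cover_of_generated A Hg) as [X [e He]].
    apply (free_hom_surj_generated X B (compFree h e)). intros x b.
    destruct (Hs x b) as [a <-]. destruct (He x a) as [u <-]. exists u. reflexivity.
Qed.

Lemma lift_free (X : FinSorted Xi) (A B : Alg M) (h : AlgHom A B) :
  ssurj h -> forall beta : FreeHom X B, exists alpha : FreeHom X A, compFree h alpha = beta.
Proof.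
  intros Hs beta.
  destruct (sorted_choice Xi (DX X) A (fun x d a => h x a = beta x (sing M (DX X) x d))
              (fun x d => Hs x _)) as [a0 Ha0].
  exists (free_ext (discrete_mor a0)). apply freehom_ext. intros x u. simpl.
  rewrite (ahom_spec h), <- Mf_comp. apply prod_Mf_generators. intros z d. apply Ha0.
Qed.

Lemma lift_free_restr (X : FinSorted Xi) (A B : Alg M) (D : list Xi)
  (h : SMor Xi (restr A D) (restr B D)) :
  is_restr_hom A B h -> ssurj h -> (forall x (d : DX X x), In x D) ->
  forall beta : FreeHom X B, exists alpha : FreeHom X A,
    forall x (Hx : In x D) u, proj1_sig (h x (exist _ (alpha x u) Hx)) = beta x u.
Proof.
  intros Hh Hs inD beta.
  destruct (sorted_choice Xi (DX X) (restr A D)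
              (fun x d a => proj1_sig (h x a) = beta x (sing M (DX X) x d))) as [a1 Ha1].
  { intros x d. destruct (Hs x (exist _ (beta x (sing M (DX X) x d)) (inD x d))) as [a Ha].
    exists a. rewrite Ha. reflexivity. }
  exists (free_ext (cmp (incl Xi A _) (discrete_mor a1))). intros x Hx u.
  change (proj1_sig (h x (exist _ (prod A x (Mf M (cmp (incl Xi A _) (discrete_mor a1)) x u)) Hx))
          = beta x u).
  rewrite Mf_comp, (Hh x Hx), <- !Mf_comp. apply prod_Mf_generators. intros z d. apply Ha1.
Qed.

Lemma val_factor (X : FinSorted Xi) (y : Xi) (A B : Alg M) (FA : finitary A) (FB : finitary B)
  (alpha : FreeHom X A) (beta : FreeHom X B) (f : A y -> B y) :
  (forall u, beta y u = f (alpha y u)) ->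
  forall r : hatM M X y, val r FB beta = f (val r FA alpha).
Proof.
  intros Hf r.
  pose (C := fun b : bool => if b then A else B).
  pose (gamma := fun b : bool => match b return FreeHom X (C b) with
                                 | true => alpha | false => beta end).
  assert (FC : finitary (ImgAlg X C gamma)).
  { apply (img_finitary X bool C gamma (true :: false :: nil)).
    - intros [|]; simpl; auto.
    - intros [|]; assumption. }
  pose proof (val_natural X y r _ (C true) FC FA (img_proj_hom X C gamma true)
                (img_free X C gamma)) as Ea.
  pose proof (val_natural X y r _ (C false) FC FB (img_proj_hom X C gamma false)
                (img_free X C gamma)) as Eb.
  (* both values are read off the representative of the value of [r] in the joint image *)
  rewrite img_free_proj in Ea, Eb. simpl in Ea, Eb. rewrite <- Ea, <- Eb. apply Hf.
Qed.

Lemma Mod_closed_quotients (Phi : Ineq M -> Prop) : closed_quotients (Mod Phi).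
Proof.
  intros A B [FA SA] [h Hs]. exists (quotient_finitary A B h Hs FA). intros e He b.
  destruct (lift_free (iX e) A B h Hs b) as [alpha <-].
  rewrite <- !(val_natural _ _ _ A B FA _ h alpha). apply mono, SA, He.
Qed.

Lemma Mod_closed_fin_subproducts (Phi : Ineq M -> Prop) : closed_fin_subproducts (Mod Phi).
Proof.
  intros I enumI HI A HA B FB h Hrefl. exists FB. intros e He b.
  apply Hrefl. intro i. destruct (HA i) as [Fi Si].
  rewrite !(val_natural _ _ _ B (A i) FB Fi (h i) b). apply Si, He.
Qed.

Lemma Mod_closed_accumulation (Phi : Ineq M -> Prop) : closed_accumulation (Mod Phi).
Proof.
  intros B FB Hacc. exists FB. intros [X y s t] He beta. simpl in beta |- *.
  set (D := y :: map (fsort X) (fenum X)).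
  destruct (Hacc D) as [A [[FA SA] [h [Hh Hs]]]].
  assert (inD : forall x (d : DX X x), In x D).
  { intros x [t0 <-]. right. apply in_map, fenum_all. }
  destruct (lift_free_restr X A B D h Hh Hs inD beta) as [alpha Halpha].
  assert (Hy : In y D) by (left; reflexivity).
  pose (hy := fun a : A y => h y (exist (fun _ => In y D) a Hy)).
  rewrite !(val_factor X y A B FA FB alpha beta (fun a => proj1_sig (hy a)))
    by (intro u; symmetry; apply Halpha).
  apply (mono _ _ _ h y). exact (SA _ He alpha).
Qed.

Lemma Mod_pseudo_variety (Phi : Ineq M -> Prop) : pseudo_variety (Mod Phi).
Proof.
  split; [intros A [FA _]; exact FA|].
  split; [apply Mod_closed_quotients|].
  split; [apply Mod_closed_fin_subproducts|apply Mod_closed_accumulation].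
Qed.

Definition valid_ineq (V : Alg M -> Prop) (e : Ineq M) : Prop :=
  forall B (HB : finitary B), V B -> satisfies HB e.

Lemma joint_image_in_V (V : Alg M -> Prop) (Hfin : forall A, V A -> finitary A)
  (Hsp : closed_fin_subproducts V) (X : FinSorted Xi) (I : Type) (enumI : list I)
  (HI : forall i, In i enumI) (B : I -> Alg M) (beta : forall i, FreeHom X (B i)) :
  (forall i, V (B i)) -> V (ImgAlg X B beta).
Proof.
  intros HV.
  apply (Hsp I enumI HI B HV _ (img_finitary X I B beta enumI HI (fun i => Hfin _ (HV i)))
           (img_proj_hom X B beta)).
  intros x c c' H. exact H.
Qed.

Lemma ultralimit_term (X : FinSorted Xi) (y : Xi) (T : Type) (U : (T -> Prop) -> Prop)
  (UU : filter.UltraFilter U) (pr : T -> MO M (DX X) y) :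
  exists t : hatM M X y,
    forall B (HB : finitary B) (b : FreeHom X B), U (fun p => b y (pr p) = val t HB b).
Proof.
  pose (lim := fun B (HB : finitary B) (b : FreeHom X B) =>
    constructive_indefinite_description _
      (ultralimit_exists T U UU (B y) (fun p => b y (pr p)) (proj1 HB y))).
  assert (compat : forall (A B : Alg M) (HA : finitary A) (HB : finitary B)
                     (phi : AlgHom A B) (b : FreeHom X A),
             phi y (proj1_sig (lim A HA b)) = proj1_sig (lim B HB (compFree phi b))).
  { intros A B HA HB phi b.
    apply (ultralimit_unique T U UU _ (fun p => compFree phi b y (pr p))).
    - apply (filter.filterS (P := fun p => b y (pr p) = proj1_sig (lim A HA b)));
        [|exact (proj2_sig (lim A HA b))].
      intros p Hp. simpl. rewrite Hp. reflexivity.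
    - exact (proj2_sig (lim B HB (compFree phi b))). }
  exists (exist _ (fun B HB b => proj1_sig (lim B HB b)) compat).
  intros B HB b. exact (proj2_sig (lim B HB b)).
Qed.

Lemma unseparated_by_joint_images (V : Alg M -> Prop) (Hfin : forall A, V A -> finitary A)
  (Hsp : closed_fin_subproducts V) (X : FinSorted Xi) (y : Xi)
  (P0 : MO M (DX X) y * MO M (DX X) y -> Prop) :
  (forall j : {B : Alg M & FreeHom X B}, V (projT1 j) ->
     exists p, P0 p /\ le Xi (projT1 j) y (projT2 j y (fst p)) (projT2 j y (snd p))) ->
  forall L : list {B : Alg M & FreeHom X B}, (forall j, In j L -> V (projT1 j)) ->
    exists p, P0 p /\
      forall j, In j L -> le Xi (projT1 j) y (projT2 j y (fst p)) (projT2 j y (snd p)).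
Proof.
  intros Hunsep L VL.
  destruct (list_sig_complete _ (fun j => In j L) L (fun j H => H)) as [enum Henum].
  pose (Bj := fun j : {j | In j L} => projT1 (proj1_sig j)).
  pose (bj := fun j : {j | In j L} => projT2 (proj1_sig j) : FreeHom X (Bj j)).
  destruct (Hunsep (existT _ (ImgAlg X Bj bj) (img_free X Bj bj))
              (joint_image_in_V V Hfin Hsp X _ enum Henum Bj bj (fun j => VL _ (proj2_sig j))))
    as [p [Hp Hle]].
  exists p. split; [exact Hp|]. intros j Hj.
  pose proof (Hle (exist _ j Hj)) as Hl. simpl in Hl. rewrite !img_proj_class in Hl. exact Hl.
Qed.

Lemma separating_algebra (V : Alg M -> Prop) (Hfin : forall A, V A -> finitary A)
  (Hsp : closed_fin_subproducts V) (A : Alg M) (FA : finitary A)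
  (SA : forall e, valid_ineq V e -> satisfies FA e) (X : FinSorted Xi) (e : FreeHom X A)
  (y : Xi) (a a' : A y) :
  ~ le Xi A y a a' ->
  exists j : {B : Alg M & FreeHom X B}, V (projT1 j) /\
    forall u v, e y u = a -> e y v = a' -> ~ le Xi (projT1 j) y (projT2 j y u) (projT2 j y v).
Proof.
  intros Nle. apply NNPP; intro Nsep.
  pose (T := (MO M (DX X) y * MO M (DX X) y)%type).
  pose (P0 := fun p : T => e y (fst p) = a /\ e y (snd p) = a').
  pose (G := fun (j : {B : Alg M & FreeHom X B}) (p : T) =>
               le Xi (projT1 j) y (projT2 j y (fst p)) (projT2 j y (snd p))).
  assert (Hunsep : forall j, V (projT1 j) -> exists p, P0 p /\ G j p).
  { intros j Vj. apply NNPP; intro N. apply Nsep. exists j. split; [exact Vj|].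
    intros u v Hu Hv Hle. apply N. exists (u, v). split; [split|]; assumption. }
  destruct (ultrafilter_of_fip T _ (fun j => V (projT1 j)) P0 G
              (unseparated_by_joint_images V Hfin Hsp X y P0 Hunsep)) as [U [UU [UP0 UG]]].
  destruct (ultralimit_term X y T U UU fst) as [s Hs].
  destruct (ultralimit_term X y T U UU snd) as [t Ht].
  assert (Hvalid : valid_ineq V {| iX := X; isort := y; ilhs := s; irhs := t |}).
  { intros B HB VB b. simpl in b |- *.
    destruct (filter.filter_ex (filter.filterI (filter.filterI (Hs B HB b) (Ht B HB b))
                                               (UG (existT _ B b) VB)))
      as [p [[E1 E2] Hp]].
    rewrite <- E1, <- E2. exact Hp. }
  assert (Ea : val s FA e = a).
  { apply (ultralimit_unique T U UU _ (fun p => e y (fst p))); [apply Hs|].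
    apply (filter.filterS (P := P0)); [intros p []; auto|exact UP0]. }
  assert (Ea' : val t FA e = a').
  { apply (ultralimit_unique T U UU _ (fun p => e y (snd p))); [apply Ht|].
    apply (filter.filterS (P := P0)); [intros p []; auto|exact UP0]. }
  apply Nle. rewrite <- Ea, <- Ea'. exact (SA _ Hvalid e).
Qed.

Lemma sorted_pairs_enum (A : SPos Xi) :
  sortwise_finite A -> forall D : list Xi,
    exists l : list {y : Xi & (A y * A y)%type}, forall p, In (projT1 p) D -> In p l.
Proof.
  intros HA D. induction D as [|y D IH].
  - exists nil. intros p [].
  - destruct IH as [l Hl]. destruct (HA y) as [ly Hly].
    exists (map (fun ab => existT (fun y => (A y * A y)%type) y ab) (list_prod ly ly) ++ l).
    intros [z [a a']] [Hz|Hz]; apply in_or_app; simpl in Hz.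
    + left. subst z. apply in_map, in_prod; apply Hly.
    + right. exact (Hl (existT _ z (a, a')) Hz).
Qed.

Lemma restr_hom_factor (X : FinSorted Xi) (C A : Alg M) (g : FreeHom X C) (e : FreeHom X A)
  (D : list Xi) (h : SMor Xi (restr C D) (restr A D)) :
  ssurj g -> (forall x (Hx : In x D) u, proj1_sig (h x (exist _ (g x u) Hx)) = e x u) ->
  is_restr_hom C A h.
Proof.
  intros Hg Hh x Hx w.
  assert (gm : forall z (u u' : restr (MO M (DX X)) D z), le Xi _ z u u' ->
      le Xi (restr C D) z (exist (fun _ => In z D) (g z (proj1_sig u)) (proj2_sig u))
                          (exist (fun _ => In z D) (g z (proj1_sig u')) (proj2_sig u'))).
  { intros z u u' H. apply mono, H. }
  pose (gD := Build_SMor Xi (restr (MO M (DX X)) D) (restr C D)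
         (fun z u => exist (fun _ => In z D) (g z (proj1_sig u)) (proj2_sig u)) gm).
  assert (gDs : ssurj gD).
  { intros z [c Hc]. destruct (Hg z c) as [u <-]. exists (exist _ u Hc). reflexivity. }
  destruct (Hsurj _ _ gD gDs x w) as [w' <-].
  set (v := Mf M (incl Xi (MO M (DX X)) (fun x _ => In x D)) x w').
  assert (Ev : Mf M (incl Xi C (fun x _ => In x D)) x (Mf M gD x w') = Mf M g x v).
  { unfold v. rewrite <- !Mf_comp. apply Mf_ext. reflexivity. }
  rewrite Ev, <- fhom_spec, Hh, fhom_spec. unfold v. rewrite <- !Mf_comp. f_equal.
  apply Mf_ext. intros z [u Hz]. symmetry. apply Hh.
Qed.

Lemma restr_quotient_of_joint_image (X : FinSorted Xi) (A : Alg M) (e : FreeHom X A)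
  (I : Type) (B : I -> Alg M) (beta : forall i, FreeHom X (B i)) (D : list Xi) :
  ssurj e ->
  (forall z, In z D -> forall u v,
     (forall i, le Xi (B i) z (beta i z u) (beta i z v)) -> le Xi A z (e z u) (e z v)) ->
  restr_is_quotient A (ImgAlg X B beta) D.
Proof.
  intros He W.
  assert (Erep : forall z, In z D -> forall u,
             e z (img_rep X B beta z (img_class X B beta z u)) = e z u).
  { intros z Hz u.
    assert (Hc : forall i, beta i z (img_rep X B beta z (img_class X B beta z u)) = beta i z u)
      by (intro i; apply (img_proj_class X I B beta)).
    apply le_antisym; apply W; auto; intro i; rewrite Hc; apply le_refl. }
  assert (hm : forall z (c c' : restr (ImgAlg X B beta) D z), le Xi _ z c c' ->
      le Xi (restr A D) z
         (exist (fun _ => In z D) (e z (img_rep X B beta z (proj1_sig c))) (proj2_sig c))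
         (exist (fun _ => In z D) (e z (img_rep X B beta z (proj1_sig c'))) (proj2_sig c'))).
  { intros z c c' H. exact (W z (proj2_sig c) _ _ H). }
  exists (Build_SMor Xi (restr (ImgAlg X B beta) D) (restr A D)
            (fun z (c : restr (ImgAlg X B beta) D z) =>
               exist (fun _ => In z D) (e z (img_rep X B beta z (proj1_sig c))) (proj2_sig c))
            hm).
  split.
  - apply (restr_hom_factor X _ A (img_free X B beta) e D _ (img_class_mor_surj X I B beta)).
    intros x Hx u. apply Erep, Hx.
  - intros z [a Hz]. destruct (He z a) as [u <-].
    exists (exist _ (img_class X B beta z u) Hz). simpl. rewrite Erep by exact Hz. reflexivity.
Qed.

Lemma pseudo_variety_Mod_valid (V : Alg M -> Prop) :
  pseudo_variety V -> forall A, V A <-> Mod (valid_ineq V) A.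
Proof.
  intros [Hfin [_ [Hsp Hacc]]] A. split.
  - intro VA. exists (Hfin A VA). intros e He. exact (He A _ VA).
  - intros [FA SA]. apply Hacc; [exact FA|]. intro D.
    destruct (free_cover_of_generated A (proj2 FA)) as [X [e He]].
    destruct (sorted_pairs_enum A (proj1 FA) D) as [pairs Hpairs].
    pose (bad := fun p : {y : Xi & (A y * A y)%type} =>
                   In (projT1 p) D /\ ~ le Xi A (projT1 p) (fst (projT2 p)) (snd (projT2 p))).
    destruct (list_sig_complete _ bad pairs (fun p Hp => Hpairs p (proj1 Hp))) as [enum Henum].
    destruct (choice (fun (p : {p | bad p}) (j : {B : Alg M & FreeHom X B}) =>
        V (projT1 j) /\ forall u v, e _ u = fst (projT2 (proj1_sig p)) ->
          e _ v = snd (projT2 (proj1_sig p)) -> ~ le Xi (projT1 j) _ (projT2 j _ u) (projT2 j _ v))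
        (fun p => separating_algebra V Hfin Hsp A FA SA X e _ _ _ (proj2 (proj2_sig p))))
      as [sep Hsep].
    pose (Bp := fun p => projT1 (sep p)).
    pose (bp := fun p => projT2 (sep p) : FreeHom X (Bp p)).
    exists (ImgAlg X Bp bp). split.
    + exact (joint_image_in_V V Hfin Hsp X _ enum Henum Bp bp (fun p => proj1 (Hsep p))).
    + apply (restr_quotient_of_joint_image X A e); [exact He|].
      intros z Hz u v Hle. apply NNPP; intro N.
      exact (proj2 (Hsep (exist bad (existT _ z (e z u, e z v)) (conj Hz N))) u v
               eq_refl eq_refl (Hle _)).
Qed.

End Algebras.

Theorem theorem7p6 (Xi : Type) (M : Monad Xi) (HM : good_monad M)
  (V : Alg M -> Prop) :
  pseudo_variety V <->
  exists Phi : Ineq M -> Prop, forall A : Alg M, V A <-> Mod Phi A.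
Proof.
  destruct HM as [_ [Hsurj _]]. split.
  - intro HV. exists (valid_ineq Xi M V). exact (pseudo_variety_Mod_valid Xi M Hsurj V HV).
  - intros [Phi HPhi].
    replace V with (Mod Phi).
    + exact (Mod_pseudo_variety Xi M Hsurj Phi).
    + apply functional_extensionality. intro A.
      apply propositional_extensionality. symmetry. apply HPhi.
Qed.
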